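(* Let $\boldsymbol\Phi$ be the symmetric adjacency matrix of a connected undirected graph $G=(V,\mathcal E)$ on $n$ nodes with nonnegative edge weights and no self-loops, with degree matrix $\mathbf D$ and Laplacian $\mathbf L=\mathbf D-\boldsymbol\Phi$. Consider the natural random walk on $G$, i.e. the Markov chain with transition matrix $\mathbf P=\mathbf D^{-1}\boldsymbol\Phi$. Then there exists an oriented edge-incidence matrix $\mathbf F$ of $G$ such that for every edge $(j,k)\in\mathcal E$, $$\mathbf F^\dagger_{\mathcal E(j,k)\cdot}=\sqrt{\Phi_{jk}}\,(\mathbf L^\dagger_{\cdot j}-\mathbf L^\dagger_{\cdot k})=\frac{\sqrt{\Phi_{jk}}}{2\operatorname{vol}(G)}\Big(\mathbf I_n-\frac{\mathbf 1_n\mathbf 1_n^\top}{n}\Big)(\mathbf C_{\cdot k}-\mathbf C_{\cdot j}),$$ where $\operatorname{vol}(G)=\operatorname{trace}(\mathbf D)$ and $\mathbf C\in\mathbb R^{n\times n}_{\ge0}$ is the matrix of commute times, $C_{ij}=H_{ij}+H_{ji}$, with $H_{ij}$ the expected time for the random walk started at node $i$ to reach node $j$.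
   Context: An oriented edge-incidence matrix $\mathbf F\in\mathbb R^{n\times|\mathcal E|}$ has, for each edge between nodes $j$ and $k$ with column index $\mathcal E(j,k)$, exactly two nonzero entries $\mathbf F_{j,\mathcal E(j,k)}=-\mathbf F_{k,\mathcal E(j,k)}=\sqrt{\Phi_{jk}}$. $\mathbf F^\dagger$ and $\mathbf L^\dagger$ denote Moore–Penrose pseudoinverses; $\mathbf F^\dagger_{\mathcal E(j,k)\cdot}$ is the row of $\mathbf F^\dagger\in\mathbb R^{|\mathcal E|\times n}$ indexed by edge $\mathcal E(j,k)$, viewed as a vector in $\mathbb R^n$. $D_{ii}=\sum_j\Phi_{ij}$. *)

From HB Require Import structures.
From mathcomp Require Import all_boot all_order all_algebra.
From mathcomp Require Import all_classical all_reals ereal sequences.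
Set Implicit Arguments. Unset Strict Implicit. Unset Printing Implicit Defensive.
Import Order.TTheory GRing.Theory Num.Theory.
Local Open Scope ring_scope.

Section Defs.
Variable R : realType.

Definition is_MP_inverse m p (A : 'M[R]_(m, p)) (X : 'M[R]_(p, m)) : Prop :=
  [/\ A *m X *m A = A, X *m A *m X = X,
      (A *m X)^T = A *m X & (X *m A)^T = X *m A].

(* The Moore--Penrose pseudoinverse (it exists and is unique over the reals). *)
Definition mppinv m p (A : 'M[R]_(m, p)) : 'M[R]_(p, m) :=
  xget 0 [set X | is_MP_inverse A X]%classic.

Variable n : nat.
Implicit Type Phi : 'M[R]_n.

Definition adjacent Phi : rel 'I_n := fun i j => 0 < Phi i j.
Definition connected_graph Phi : Prop := forall i j, connect (adjacent Phi) i j.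

Definition degmx Phi : 'M[R]_n := diag_mx (\row_i \sum_j Phi i j).
Definition vol Phi : R := \tr (degmx Phi).
Definition laplacian Phi : 'M[R]_n := degmx Phi - Phi.
Definition transmx Phi : 'M[R]_n := invmx (degmx Phi) *m Phi.

(* P_i(T_j > t) where T_j = min {t >= 0 | X_t = j}, X_0 = i:
   probability that X_0, ..., X_t all avoid j, i.e. (if i <> j) the sum over
   j-avoiding paths i = x_0, x_1, ..., x_t of the products of transition
   probabilities, which is ((P with column j killed)^t 1)_i. *)
Definition hit_tail (P : 'M[R]_n) (i j : 'I_n) (t : nat) : R :=
  if i == j then 0 else
  (iter t (mulmx (\matrix_(a, b) if b == j then 0 else P a b))
          (const_mx 1 : 'cV[R]_n)) i ord0.

(* expected hitting time E_i[T_j] = sum_{t >= 0} P_i(T_j > t), in \bar R *)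
Definition hitting_time (P : 'M[R]_n) (i j : 'I_n) : \bar R :=
  (\sum_(0 <= t <oo) (hit_tail P i j t)%:E)%E.

Definition commute_mx Phi : 'M[R]_n :=
  \matrix_(i, j) fine (hitting_time (transmx Phi) i j + hitting_time (transmx Phi) j i)%E.

(* e enumerates the edges with an orientation: column c of F corresponds to
   the oriented edge (e c).1 -> (e c).2; every edge appears exactly once. *)
Definition edge_enum m Phi (e : 'I_m -> 'I_n * 'I_n) : Prop :=
  (forall c, 0 < Phi (e c).1 (e c).2) /\
  (forall j k, 0 < Phi j k -> exists! c, e c = (j, k) \/ e c = (k, j)).

Definition oriented_incidence m Phi (e : 'I_m -> 'I_n * 'I_n) (F : 'M[R]_(n, m))
  : Prop :=
  edge_enum Phi e /\
  forall i c, F i c =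
    if i == (e c).1 then Num.sqrt (Phi (e c).1 (e c).2)
    else if i == (e c).2 then - Num.sqrt (Phi (e c).1 (e c).2) else 0.

End Defs.

From Pilot Require Import Defs.
From HB Require Import structures.
From mathcomp Require Import all_boot all_order all_algebra.
From mathcomp Require Import all_classical all_reals ereal sequences.
From mathcomp Require Import normedtype.
From mathcomp Require Import ring lra.
Import Order.TTheory GRing.Theory Num.Theory.
Import numFieldNormedType.Exports.
Set Implicit Arguments. Unset Strict Implicit. Unset Printing Implicit Defensive.
Local Open Scope ring_scope.
Local Open Scope classical_set_scope.

(* Let J be the all-ones matrix. Connectivity and the maximum principle show that
   the kernel of L is spanned by 1, so L + J/n is invertible and
   M = (L + J/n)^-1 - J/n satisfies L M = M L = I - J/n: it is L^+.
   The incidence matrix F of the edges j < k satisfies F F^T = L, hence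
   F^+ = F^T (F F^T)^+ = F^T L^+, whose rows are the first identity.
   For the second, h_i = (M d)_i - (M d)_j + vol(G) (M_jj - M_ij) satisfies the
   first-step equations h_i = 1 + sum_(k != j) P_ik h_k (i != j) and h >= 0 by
   the minimum principle; the tail series of the hitting time of j then sums to
   h. So C_ab = vol(G) (M_aa + M_bb - 2 M_ab), and centring C_.k - C_.j kills
   its constant part, leaving 2 vol(G) (M_.j - M_.k). *)

Lemma mulmx_tr_eq0 (R : realDomainType) m p (A : 'M[R]_(m, p)) :
  A *m A^T = 0 -> A = 0.
Proof.
move=> AAt0; apply/matrixP => i k; rewrite mxE.
have := congr1 (fun B : 'M_m => B i i) AAt0; rewrite !mxE => sum0.
have : \sum_l A i l ^+ 2 = 0.
  by rewrite -[RHS]sum0; apply: eq_bigr => l _; rewrite mxE.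
move/psumr_eq0P => /(_ (fun l _ => sqr_ge0 (A i l)) k isT) /eqP.
by rewrite sqrf_eq0 => /eqP.
Qed.

Section MoorePenrose.
Variable R : realType.

Lemma is_MP_inverse_unique m p (A : 'M[R]_(m, p)) X Y :
  is_MP_inverse A X -> is_MP_inverse A Y -> X = Y.
Proof.
move=> [h1 h2 h3 h4] [k1 k2 k3 k4].
have eA1 : A^T = A^T *m (A *m Y) by rewrite -{1}k1 trmx_mul k3.
have eA2 : A^T = (X *m A) *m A^T by rewrite -{1}h1 -mulmxA trmx_mul h4.
have eX : X = X *m A *m Y.
  transitivity (X *m (A *m X)^T); first by rewrite h3 mulmxA h2.
  rewrite trmx_mul mulmxA eA1 !mulmxA -[X *m X^T *m A^T]mulmxA -trmx_mul h3.
  by rewrite !mulmxA h2.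
have eY : Y = X *m A *m Y.
  transitivity ((Y *m A)^T *m Y); first by rewrite k4 k2.
  rewrite trmx_mul eA2 -!mulmxA [A^T *m (Y^T *m Y)]mulmxA -trmx_mul k4.
  by rewrite k2 mulmxA.
by rewrite eY -eX.
Qed.

Lemma mppinvE m p (A : 'M[R]_(m, p)) X : is_MP_inverse A X -> mppinv A = X.
Proof.
move=> AX; apply: (is_MP_inverse_unique _ AX).
exact: (xgetI 0 (P := [set X | is_MP_inverse A X]) AX).
Qed.

Lemma is_MP_inverse_tr m p (A : 'M[R]_(m, p)) X :
  is_MP_inverse A X -> is_MP_inverse A^T X^T.
Proof.
move=> [h1 h2 h3 h4]; split.
- by rewrite -mulmxA -!trmx_mul h1.
- by rewrite -mulmxA -!trmx_mul h2.
- by rewrite -trmx_mul trmxK h4.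
- by rewrite -trmx_mul trmxK h3.
Qed.

Lemma is_MP_inverse_sym n (A : 'M[R]_n) X :
  A^T = A -> is_MP_inverse A X -> X^T = X.
Proof.
move=> Asym AX; apply: (is_MP_inverse_unique _ AX).
by rewrite -[in X in is_MP_inverse X]Asym; apply: is_MP_inverse_tr.
Qed.

Lemma is_MP_inverse_gram m p (F : 'M[R]_(m, p)) X :
  is_MP_inverse (F *m F^T) X -> is_MP_inverse F (F^T *m X).
Proof.
set L := F *m F^T => LX; have [h1 h2 h3 _] := LX.
have Xsym : X^T = X by apply: is_MP_inverse_sym LX; rewrite /L trmx_mul trmxK.
have LXF : L *m X *m F = F.
  (* [(1 - L X) F] has Gram matrix [(1 - L X) L (1 - L X)^T = 0]. *)
  suff : (1%:M - L *m X) *m F = 0 by rewrite mulmxBl mul1mx => /subr0_eq.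
  apply: mulmx_tr_eq0; rewrite trmx_mul mulmxA -[_ *m F *m F^T]mulmxA -/L.
  by rewrite mulmxBl mul1mx h1 subrr !mul0mx.
split.
- by rewrite mulmxA -/L LXF.
- by rewrite -!mulmxA [F *m (F^T *m X)]mulmxA -/L [X *m (L *m X)]mulmxA h2.
- by rewrite mulmxA -/L h3.
- by rewrite !trmx_mul trmxK Xsym mulmxA.
Qed.

End MoorePenrose.

Section NonnegMatrix.
Variables (R : numDomainType) (n : nat) (Q : 'M[R]_n).
Hypothesis Q_ge0 : forall a b, 0 <= Q a b.

Lemma iter_mulmx_le t (x y : 'cV[R]_n) : (forall a, x a 0 <= y a 0) ->
  forall a, iter t (mulmx Q) x a 0 <= iter t (mulmx Q) y a 0.
Proof.
move=> xy; elim: t => [|t IH] a //=.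
by rewrite !mxE; apply: ler_sum => b _; apply: ler_wpM2l.
Qed.

Lemma iter_mulmx_ge0 t (x : 'cV[R]_n) : (forall a, 0 <= x a 0) ->
  forall a, 0 <= iter t (mulmx Q) x a 0.
Proof.
move=> x_ge0; elim: t => [|t IH] a //=.
by rewrite mxE; apply: sumr_ge0 => b _; apply: mulr_ge0.
Qed.

End NonnegMatrix.

Definition taboo_mx (R : nmodType) n (P : 'M[R]_n) (j : 'I_n) : 'M[R]_n :=
  \matrix_(a, b) if b == j then 0 else P a b.

Section TabooEquation.
Variables (R : realType) (n : nat) (Q : 'M[R]_n) (j : 'I_n) (u : 'cV[R]_n).
Hypothesis Q_ge0 : forall a b, 0 <= Q a b.
Hypothesis Q_col0 : forall a, Q a j = 0.
Hypothesis u_ge0 : forall a, 0 <= u a 0.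
Hypothesis u_eq : forall i, i != j -> u i 0 = 1 + (Q *m u) i 0.

Local Notation v t := (iter t (mulmx Q) (const_mx 1 : 'cV[R]_n)).
Local Notation r t := (iter t (mulmx Q) u).

Lemma taboo_partial_sum T i : i != j -> \sum_(t < T) v t i 0 = u i 0 - r T i 0.
Proof.
elim: T i => [|T IH] i ij; first by rewrite big_ord0 subrr.
have shift : \sum_(t < T) v t.+1 i 0 = \sum_b Q i b * \sum_(t < T) v t b 0.
  under eq_bigr do rewrite /= mxE.
  by rewrite exchange_big; apply: eq_bigr => b _; rewrite mulr_sumr.
rewrite big_ord_recl /= shift {1}(u_eq ij) !mxE -addrA; congr (_ + _).
rewrite -sumrB; apply: eq_bigr => b _.
by case: (eqVneq b j) => [->|bj]; rewrite ?Q_col0 ?mul0r ?subrr // IH // mulrBr.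
Qed.

Lemma taboo_series_cvg i : i != j -> cvgn (series (fun t => v t i 0)).
Proof.
move=> ij; apply: nondecreasing_is_cvgn.
  apply: nondecreasing_series => t _ _.
  by apply: iter_mulmx_ge0 => // b; rewrite mxE.
exists (u i 0) => _ [T _ <-].
by rewrite /series /= big_mkord taboo_partial_sum // gerBl; apply: iter_mulmx_ge0.
Qed.

(* Since u <= K 1 entrywise, the remainder Q^T u is at most K times the term
   Q^T 1 of a convergent series. *)
Lemma taboo_remainder_cvg0 i : i != j -> (fun T => r T i 0) @ \oo --> 0.
Proof.
move=> ij; set K := \sum_a u a 0.
have r_le T : r T i 0 <= K * v T i 0.
  have -> : K * v T i 0 = iter T (mulmx Q) (K *: (const_mx 1 : 'cV[R]_n)) i 0.
    have iterZ : iter T (mulmx Q) (K *: (const_mx 1 : 'cV[R]_n)) = K *: v T.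
      by elim: T => //= T ->; rewrite scalemxAr.
    by rewrite iterZ mxE.
  apply: iter_mulmx_le => // a; rewrite !mxE mulr1.
  by rewrite /K (bigD1 a) //= lerDl; apply: sumr_ge0.
apply: (@squeeze_cvgr _ _ _ _ (fun _ => 0) (fun T => K * v T i 0)).
- by apply: nearW => T; rewrite r_le andbT; apply: iter_mulmx_ge0.
- exact: cvg_cst.
- rewrite -(mulr0 K); apply: cvgMr.
  by apply: cvg_series_cvg_0; apply: taboo_series_cvg.
Qed.

Lemma taboo_series i : i != j -> (\sum_(0 <= t <oo) (v t i 0)%:E)%E = (u i 0)%:E.
Proof.
move=> ij.
have S_cvg : (fun T => \sum_(t < T) v t i 0) @ \oo --> u i 0.
  have -> : (fun T => \sum_(t < T) v t i 0) = (fun T => u i 0 - r T i 0).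
    by apply/funext => T; rewrite taboo_partial_sum.
  rewrite -[X in _ --> X]subr0.
  by apply: cvgB; [apply: cvg_cst | apply: taboo_remainder_cvg0].
have -> : (fun T => \sum_(0 <= t < T) (v t i 0)%:E)%E =
          EFin \o (fun T => \sum_(t < T) v t i 0).
  by apply/funext => T /=; rewrite sumEFin big_mkord.
by rewrite EFin_lim ?(cvg_lim _ S_cvg) //; apply/cvg_ex; exists (u i 0).
Qed.

End TabooEquation.

Lemma hitting_time_diag (R : realType) n (P : 'M[R]_n) j : hitting_time P j j = 0%E.
Proof. by rewrite /hitting_time /hit_tail eqxx; apply: eseries0. Qed.

Section HittingTime.
Variables (R : realType) (n : nat) (P : 'M[R]_n) (j : 'I_n) (u : 'cV[R]_n).
Hypothesis P_ge0 : forall a b, 0 <= P a b.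
Hypothesis u_eq : forall i, i != j -> u i 0 = 1 + (taboo_mx P j *m u) i 0.

Lemma taboo_mx_ge0 a b : 0 <= taboo_mx P j a b.
Proof. by rewrite mxE; case: ifP. Qed.

(* Minimum principle: if the minimum u_m were negative, then m != j and the
   equation would give u_m >= 1 + u_m. *)
Lemma taboo_solution_ge0 : (forall a, \sum_b P a b <= 1) -> 0 <= u j 0 ->
  forall a, 0 <= u a 0.
Proof.
move=> P_sub uj_ge0 a.
have [m _ u_min] := @arg_minP _ R _ a predT (fun z => u z 0) isT.
apply: le_trans (u_min a isT) => /=.
case: (eqVneq m j) => [-> //|mj]; rewrite leNgt; apply/negP => um_lt0.
have Qm_le1 : \sum_b taboo_mx P j m b <= 1.
  apply: le_trans (P_sub m); apply: ler_sum => b _; rewrite mxE.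
  by case: ifP => // _; apply: P_ge0.
have Qm_ge0 : 0 <= \sum_b taboo_mx P j m b by apply: sumr_ge0 => b _; apply: taboo_mx_ge0.
have Qu_ge : u m 0 * \sum_b taboo_mx P j m b <= (taboo_mx P j *m u) m 0.
  rewrite mxE mulr_sumr; apply: ler_sum => b _; rewrite mulrC.
  by apply: ler_wpM2l; [apply: taboo_mx_ge0 | apply: u_min].
have := u_eq mj; nra.
Qed.

Lemma hitting_timeE : (forall a, 0 <= u a 0) ->
  forall i, i != j -> hitting_time P i j = (u i 0)%:E.
Proof.
move=> u_ge0 i ij; rewrite /hitting_time /hit_tail (negPf ij).
have Q_col0 a : taboo_mx P j a j = 0 by rewrite mxE eqxx.
exact: (taboo_series taboo_mx_ge0 Q_col0 u_ge0 u_eq ij).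
Qed.

End HittingTime.

Lemma const1_mulmxE (R : pzSemiRingType) m n p (A : 'M[R]_(n, p)) i c :
  ((const_mx 1 : 'M[R]_(m, n)) *m A) i c = \sum_k A k c.
Proof. by rewrite mxE; apply: eq_bigr => k _; rewrite mxE mul1r. Qed.

Lemma const1_mulmx_const1 (R : pzSemiRingType) m n p :
  (const_mx 1 : 'M[R]_(m, n)) *m (const_mx 1 : 'M[R]_(n, p)) = n%:R *: const_mx 1.
Proof.
apply/matrixP => i c; rewrite const1_mulmxE !mxE.
by under eq_bigr do rewrite mxE; rewrite sumr_const card_ord mulr1.
Qed.

Section Laplacian.
Variables (R : realType) (n : nat) (Phi : 'M[R]_n).
Hypothesis Phi_sym : Phi^T = Phi.
Hypothesis Phi_ge0 : forall a b, 0 <= Phi a b.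
Hypothesis Phi_conn : connected_graph Phi.

Local Notation deg i := (\sum_k Phi i k).
Local Notation L := (laplacian Phi).
Local Notation J := (const_mx 1 : 'M[R]_n).
Local Notation Jn := (n%:R^-1 *: J).

Lemma Phi_symE a b : Phi a b = Phi b a.
Proof. by rewrite -{1}Phi_sym mxE. Qed.

Lemma laplacian_mulmxE p (A : 'M[R]_(n, p)) i c :
  (L *m A) i c = \sum_k Phi i k * (A i c - A k c).
Proof.
rewrite /laplacian /degmx mulmxBl mul_diag_mx !mxE mulr_suml -sumrB.
by apply: eq_bigr => k _; rewrite mulrBr.
Qed.

Lemma laplacian_sym : L^T = L.
Proof. by rewrite /laplacian /degmx linearB /= tr_diag_mx Phi_sym. Qed.

Lemma laplacian_const1 p : L *m (const_mx 1 : 'M[R]_(n, p)) = 0.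
Proof.
apply/matrixP => i c; rewrite laplacian_mulmxE !mxE big1 // => k _.
by rewrite !mxE subrr mulr0.
Qed.

Lemma const1_laplacian : J *m L = 0.
Proof.
have := congr1 trmx (laplacian_const1 n).
by rewrite trmx_mul laplacian_sym trmx_const trmx0.
Qed.

Lemma dirichlet_form (u w : 'cV[R]_n) :
  \sum_x \sum_y Phi x y * ((u x 0 - u y 0) * (w x 0 - w y 0)) =
  (u^T *m L *m w) 0 0 *+ 2.
Proof.
have half : \sum_x \sum_y Phi x y * (u x 0 * (w x 0 - w y 0)) = (u^T *m L *m w) 0 0.
  rewrite -mulmxA mxE; apply: eq_bigr => x _.
  by rewrite mxE laplacian_mulmxE mulr_sumr; apply: eq_bigr => y _; ring.
have swap : \sum_x \sum_y Phi x y * (- u y 0 * (w x 0 - w y 0)) =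
            \sum_x \sum_y Phi x y * (u x 0 * (w x 0 - w y 0)).
  rewrite exchange_big; apply: eq_bigr => x _; apply: eq_bigr => y _.
  by rewrite Phi_symE; ring.
rewrite -half mulr2n -{1}swap -big_split /=; apply: eq_bigr => x _.
by rewrite -big_split /=; apply: eq_bigr => y _; ring.
Qed.

(* Maximum principle: the maximisers of a harmonic x are closed under adjacency. *)
Lemma laplacian_ker_const (x : 'cV[R]_n) :
  L *m x = 0 -> forall a b, x a 0 = x b 0.
Proof.
move=> Lx0 a b.
have [m _ x_max] := @arg_maxP _ R _ a predT (fun z => x z 0) isT.
have nb_max y z : x y 0 = x m 0 -> 0 < Phi y z -> x z 0 = x m 0.
  move=> ym yz.
  have sum0 : \sum_k Phi y k * (x y 0 - x k 0) = 0.
    by rewrite -laplacian_mulmxE Lx0 mxE.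
  have terms_ge0 k : true -> 0 <= Phi y k * (x y 0 - x k 0).
    by move=> _; apply: mulr_ge0 => //; rewrite ym subr_ge0; apply: x_max.
  have := (psumr_eq0P terms_ge0 sum0) z isT; move/eqP.
  by rewrite mulf_eq0 gt_eqF //= subr_eq0 => /eqP <-.
have cl : closed_mem (Defs.adjacent Phi) (mem [pred z | x z 0 == x m 0]).
  move=> y z yz; rewrite !inE; apply/eqP/eqP => [ym|zm]; first exact: nb_max ym yz.
  by apply: nb_max zm _; rewrite Phi_symE.
have top z : x z 0 = x m 0.
  by have := closed_connect cl (Phi_conn m z); rewrite !inE eqxx => /esym /eqP.
by rewrite !top.
Qed.

Lemma deg_gt0 i k : i != k -> 0 < deg i.
Proof.
move=> ik; case/connectP: (Phi_conn i k) => -[/= _ ki|y p /= /andP[iy _] _].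
  by rewrite ki eqxx in ik.
rewrite (bigD1 y) //=; apply: (lt_le_trans iy).
by rewrite lerDl; apply: sumr_ge0.
Qed.

Hypothesis n_gt0 : (0 < n)%N.

Lemma avg_idem : Jn *m Jn = Jn.
Proof.
rewrite -scalemxAl -scalemxAr const1_mulmx_const1 (scalerA n%:R^-1 n%:R).
by rewrite mulVf ?scale1r // pnatr_eq0 -lt0n.
Qed.

Lemma avg_mulmxE p (A : 'M[R]_(n, p)) i c : (Jn *m A) i c = n%:R^-1 * \sum_k A k c.
Proof. by rewrite -scalemxAl mxE const1_mulmxE. Qed.

Lemma centering_mulmxE p (A : 'M[R]_(n, p)) i c :
  ((1%:M - Jn) *m A) i c = A i c - n%:R^-1 * \sum_k A k c.
Proof. by rewrite mulmxBl mul1mx 2!mxE avg_mulmxE. Qed.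

Lemma laplacian_avg : L *m Jn = 0.
Proof. by rewrite -scalemxAr laplacian_const1 scaler0. Qed.

Lemma avg_laplacian : Jn *m L = 0.
Proof. by rewrite -scalemxAl const1_laplacian scaler0. Qed.

Lemma shifted_laplacian_unit : L + Jn \in unitmx.
Proof.
rewrite -row_free_unit; apply/inj_row_free => v vA0.
have Ax0 : (L + Jn) *m v^T = 0.
  have := congr1 trmx vA0.
  by rewrite trmx_mul trmx0 linearD /= laplacian_sym linearZ /= trmx_const.
have Jx0 : Jn *m v^T = 0.
  have := congr1 (mulmx Jn) Ax0.
  by rewrite mulmx0 mulmxA mulmxDr avg_laplacian add0r avg_idem.
have Lx0 : L *m v^T = 0 by move: Ax0; rewrite mulmxDl Jx0 addr0.
apply/matrixP => i a; rewrite (ord1 i).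
move/matrixP/(_ a 0): Jx0; rewrite avg_mulmxE !mxE.
rewrite (eq_bigr (fun=> v^T a 0)); last by move=> k _; apply: laplacian_ker_const.
rewrite sumr_const card_ord -[v^T a 0 *+ n]mulr_natl mulrA mulVf ?mul1r ?mxE //.
by rewrite pnatr_eq0 -lt0n.
Qed.

Lemma shifted_laplacian_avg : (L + Jn) *m Jn = Jn.
Proof. by rewrite mulmxDl laplacian_avg add0r avg_idem. Qed.

Lemma avg_shifted_laplacian : Jn *m (L + Jn) = Jn.
Proof. by rewrite mulmxDr avg_laplacian add0r avg_idem. Qed.

Lemma avg_invmx_shifted : Jn *m invmx (L + Jn) = Jn.
Proof.
have := congr1 (mulmx^~ (invmx (L + Jn))) avg_shifted_laplacian.
by rewrite -mulmxA mulmxV ?shifted_laplacian_unit // mulmx1.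
Qed.

Lemma invmx_shifted_avg : invmx (L + Jn) *m Jn = Jn.
Proof.
have := congr1 (mulmx (invmx (L + Jn))) shifted_laplacian_avg.
by rewrite mulmxA mulVmx ?shifted_laplacian_unit // mul1mx.
Qed.

Definition lapinv : 'M[R]_n := invmx (L + Jn) - Jn.
Local Notation M := lapinv.

Lemma laplacian_lapinv : L *m M = 1%:M - Jn.
Proof.
rewrite mulmxBr laplacian_avg subr0 -[L in L *m _](addrK Jn).
by rewrite mulmxBl mulmxV ?shifted_laplacian_unit // avg_invmx_shifted.
Qed.

Lemma lapinv_laplacian : M *m L = 1%:M - Jn.
Proof.
rewrite mulmxBl avg_laplacian subr0 -[L in _ *m L](addrK Jn).
by rewrite mulmxBr mulVmx ?shifted_laplacian_unit // invmx_shifted_avg.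
Qed.

Lemma avg_lapinv : Jn *m M = 0.
Proof. by rewrite mulmxBr avg_invmx_shifted avg_idem subrr. Qed.

Lemma is_MP_inverse_lapinv : is_MP_inverse L M.
Proof.
have E_sym : (1%:M - Jn)^T = 1%:M - Jn by rewrite linearB /= trmx1 linearZ /= trmx_const.
split.
- by rewrite laplacian_lapinv mulmxBl mul1mx avg_laplacian subr0.
- by rewrite lapinv_laplacian mulmxBl mul1mx avg_lapinv subr0.
- by rewrite laplacian_lapinv E_sym.
- by rewrite lapinv_laplacian E_sym.
Qed.

Lemma lapinv_sym : M^T = M.
Proof. exact: is_MP_inverse_sym laplacian_sym is_MP_inverse_lapinv. Qed.

Lemma lapinv_symE a b : M a b = M b a.
Proof. by rewrite -{1}lapinv_sym mxE. Qed.

Lemma centering_lapinv : (1%:M - Jn) *m M = M.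
Proof. by rewrite mulmxBl mul1mx avg_lapinv subr0. Qed.

Lemma centering_const1 : (1%:M - Jn) *m (const_mx 1 : 'cV[R]_n) = 0.
Proof.
rewrite mulmxBl mul1mx -scalemxAl const1_mulmx_const1 (scalerA n%:R^-1 n%:R).
by rewrite mulVf ?scale1r ?subrr // pnatr_eq0 -lt0n.
Qed.

Hypothesis deg_pos : forall i, 0 < deg i.
Local Notation degv := (\col_i deg i).

Lemma vol_sum_deg : vol Phi = \sum_i deg i.
Proof. by rewrite /vol /degmx mxtrace_diag; apply: eq_bigr => i _; rewrite mxE. Qed.

Lemma vol_gt0 : 0 < vol Phi.
Proof.
pose i0 := Ordinal n_gt0; rewrite vol_sum_deg (bigD1 i0) //=.
by apply: (lt_le_trans (deg_pos i0)); rewrite lerDl sumr_ge0 // => i _; apply: ltW.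
Qed.

Lemma transmxE a b : transmx Phi a b = Phi a b / deg a.
Proof.
set Dinv := diag_mx (\row_i (deg i)^-1).
have D_Dinv : degmx Phi *m Dinv = 1%:M.
  rewrite /degmx mulmx_diag; apply/matrixP => x y; rewrite !mxE divff //.
  by rewrite gt_eqF.
have invD : invmx (degmx Phi) = Dinv.
  have [D_unit _] := mulmx1_unit D_Dinv.
  by rewrite -[RHS](mulKmx D_unit) D_Dinv mulmx1.
by rewrite /transmx invD mul_diag_mx !mxE mulrC.
Qed.

Lemma transmx_sum a : \sum_b transmx Phi a b = 1.
Proof.
under eq_bigr do rewrite transmxE.
by rewrite -mulr_suml divff // gt_eqF.
Qed.

(* The classical formula H_ij = (L^+ d)_i - (L^+ d)_j + vol(G) (L^+_jj - L^+_ij):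
   it solves L h = d - vol(G) e_j and vanishes at j. *)
Definition hitvec (j : 'I_n) : 'cV[R]_n :=
  \col_i ((M *m degv) i 0 - (M *m degv) j 0 + vol Phi * (M j j - M i j)).

Lemma hitvecE j i :
  hitvec j i 0 = (M *m degv) i 0 - (M *m degv) j 0 + vol Phi * (M j j - M i j).
Proof. by rewrite mxE. Qed.

Lemma hitvec_diag j : hitvec j j 0 = 0.
Proof. by rewrite hitvecE !subrr mulr0 addr0. Qed.

Lemma laplacian_hitvec j i : i != j -> (L *m hitvec j) i 0 = deg i.
Proof.
move=> ij.
have -> : (L *m hitvec j) i 0 = (L *m (M *m degv)) i 0 - vol Phi * (L *m M) i j.
  rewrite !laplacian_mulmxE mulr_sumr -sumrB.
  by apply: eq_bigr => k _; rewrite !mxE; ring.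
rewrite mulmxA laplacian_lapinv centering_mulmxE !mxE (negPf ij) /=.
under [in n%:R^-1 * _]eq_bigr do rewrite mxE.
by rewrite -vol_sum_deg; ring.
Qed.

Lemma hitvec_eq j i : i != j ->
  hitvec j i 0 = 1 + (taboo_mx (transmx Phi) j *m hitvec j) i 0.
Proof.
move=> ij; have := laplacian_hitvec ij; rewrite laplacian_mulmxE.
under eq_bigr do rewrite mulrBr.
rewrite sumrB -mulr_suml => h_sum.
have -> : (taboo_mx (transmx Phi) j *m hitvec j) i 0 =
          (\sum_k Phi i k * hitvec j k 0) / deg i.
  rewrite mxE mulr_suml; apply: eq_bigr => k _; rewrite mxE.
  case: eqP => [->|_]; first by rewrite hitvec_diag !(mulr0, mul0r).
  by rewrite transmxE mulrAC.
have -> : \sum_k Phi i k * hitvec j k 0 = deg i * hitvec j i 0 - deg i.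
  by rewrite -[X in _ - X]h_sum; ring.
have := deg_pos i; rewrite lt0r => /andP[deg_neq0 _].
by field.
Qed.

Lemma hitting_time_hitvec i j : i != j ->
  hitting_time (transmx Phi) i j = (hitvec j i 0)%:E.
Proof.
have P_ge0 a b : 0 <= transmx Phi a b by rewrite transmxE divr_ge0 // ltW.
move=> ij; apply: (hitting_timeE P_ge0 (@hitvec_eq j) _ ij).
apply: (taboo_solution_ge0 P_ge0 (@hitvec_eq j)); last by rewrite hitvec_diag.
by move=> a; rewrite transmx_sum.
Qed.

Lemma commute_mxE a b : commute_mx Phi a b = vol Phi * (M a a + M b b - 2 * M a b).
Proof.
rewrite mxE; case: (eqVneq a b) => [<-|ab].
  by rewrite hitting_time_diag /=; ring.
rewrite hitting_time_hitvec // hitting_time_hitvec 1?eq_sym //= !hitvecE.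
by rewrite (lapinv_symE b a); ring.
Qed.

Lemma centering_commute_col j k :
  (1%:M - Jn) *m (col k (commute_mx Phi) - col j (commute_mx Phi)) =
  (2 * vol Phi) *: (col j M - col k M).
Proof.
have := commute_mxE; move: (commute_mx Phi) => C CE.
have -> : col k C - col j C =
    (vol Phi * (M k k - M j j)) *: const_mx 1 - (2 * vol Phi) *: (col k M - col j M).
  by apply/matrixP => a z; rewrite !mxE !CE !mxE; ring.
rewrite mulmxBr -!scalemxAr centering_const1 scaler0 sub0r mulmxBr !colE !mulmxA.
by rewrite centering_lapinv -!colE -scalerN opprB.
Qed.

End Laplacian.

Lemma sum_pairs_lt (V : nmodType) n (F : 'I_n -> 'I_n -> V) :
  (forall x y, F x y = F y x) -> (forall x, F x x = 0) ->
  \sum_x \sum_y F x y = (\sum_(p : 'I_n * 'I_n | (p.1 < p.2)%N) F p.1 p.2) *+ 2.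
Proof.
move=> F_sym F_diag; rewrite pair_bigA mulr2n.
rewrite (bigID (fun p : 'I_n * 'I_n => (p.1 < p.2)%N)) /=; congr (_ + _).
rewrite (bigID (fun p : 'I_n * 'I_n => (p.2 < p.1)%N)) /= [X in _ + X]big1 ?addr0.
  have swap_inj : injective (fun p : 'I_n * 'I_n => (p.2, p.1)).
    by move=> [? ?] [? ?] [-> ->].
  rewrite [RHS](reindex_inj swap_inj) /=; apply: eq_big => [[x y]|[x y] _] /=.
    by rewrite andb_idl // => /ltnW; rewrite leqNgt.
  exact: F_sym.
move=> [x y] /=; rewrite -!leqNgt => /andP[yx xy].
by have /val_inj -> : val x = val y by apply/eqP; rewrite eqn_leq xy yx.
Qed.

Section Incidence.
Variables (R : realType) (n : nat) (Phi : 'M[R]_n).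
Hypothesis Phi_sym : Phi^T = Phi.
Hypothesis Phi_ge0 : forall a b, 0 <= Phi a b.
Hypothesis Phi_diag : forall i, Phi i i = 0.

Definition edges : {set 'I_n * 'I_n} :=
  [set p : 'I_n * 'I_n | (p.1 < p.2)%N && (0 < Phi p.1 p.2)].

Definition edge_of (c : 'I_#|edges|) : 'I_n * 'I_n := enum_val c.

Definition edge_vec (p : 'I_n * 'I_n) : 'cV[R]_n :=
  Num.sqrt (Phi p.1 p.2) *: (delta_mx p.1 0 - delta_mx p.2 0).

Definition incidence : 'M[R]_(n, #|edges|) := \matrix_(i, c) edge_vec (edge_of c) i 0.

Lemma edge_of_lt c : ((edge_of c).1 < (edge_of c).2)%N.
Proof. by have := enum_valP c; rewrite inE => /andP[]. Qed.

Lemma edge_of_gt0 c : 0 < Phi (edge_of c).1 (edge_of c).2.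
Proof. by have := enum_valP c; rewrite inE => /andP[]. Qed.

Lemma edge_of_neq c : (edge_of c).1 != (edge_of c).2.
Proof. by rewrite -(inj_eq val_inj) neq_ltn edge_of_lt. Qed.

Lemma edge_enum_edge_of : edge_enum Phi edge_of.
Proof.
split=> [|j k]; first exact: edge_of_gt0.
wlog jk : j k / (j < k)%N => [hwlog jk_pos|jk_pos].
  case: (ltngtP j k) => [lt|gt|/val_inj eq]; first exact: hwlog.
    have [|c [ec c_uniq]] := hwlog k j gt; first by rewrite -(Phi_symE Phi_sym).
    by exists c; split=> [|c' /or_comm /c_uniq]; first exact/or_comm.
  by rewrite eq Phi_diag ltxx in jk_pos.
have jk_in : (j, k) \in edges by rewrite inE jk jk_pos.
exists (enum_rank_in jk_in (j, k)); split; first by left; rewrite /edge_of enum_rankK_in.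
move=> c [ec|ec]; apply: enum_val_inj; rewrite enum_rankK_in // -/(edge_of c) ec //.
by have := edge_of_lt c; rewrite ec /= ltnNge ltnW.
Qed.

Lemma incidence_oriented : oriented_incidence Phi edge_of incidence.
Proof.
split=> [|i c]; first exact: edge_enum_edge_of.
rewrite !mxE !eqxx !andbT; have := edge_of_neq c.
case: (eqVneq i (edge_of c).1) => [-> /negPf -> | _ _] /=.
  by rewrite subr0 mulr1.
by case: eqP => _; rewrite ?subrr ?sub0r ?mulrN1 ?mulr0.
Qed.

Lemma col_incidence c : col c incidence = edge_vec (edge_of c).
Proof. by apply/matrixP => i z; rewrite (ord1 z) !mxE. Qed.

Lemma incidence_gram : incidence *m incidence^T = laplacian Phi.
Proof.
apply/matrixP => a b.
pose u x : R := (delta_mx a 0 : 'cV[R]_n) x 0.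
pose w x : R := (delta_mx b 0 : 'cV[R]_n) x 0.
pose H x y := Phi x y * ((u x - u y) * (w x - w y)).
have gram_edges : (incidence *m incidence^T) a b = \sum_(p in edges) H p.1 p.2.
  rewrite mxE [RHS]big_enum_val; apply: eq_bigr => c _.
  rewrite !mxE /H /u /w !mxE !eqxx !andbT ![(_ == a)]eq_sym ![(_ == b)]eq_sym.
  by rewrite mulrACA -expr2 sqr_sqrtr // ltW // edge_of_gt0.
have edges_lt : \sum_(p in edges) H p.1 p.2 =
                 \sum_(p : 'I_n * 'I_n | (p.1 < p.2)%N) H p.1 p.2.
  rewrite big_mkcond [RHS]big_mkcond; apply: eq_bigr => p _; rewrite inE.
  case: ltnP => //= _; rewrite lt0r Phi_ge0 andbT.
  by case: eqP => [Phi0|//]; rewrite /H Phi0 mul0r.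
have : (\sum_(p : 'I_n * 'I_n | (p.1 < p.2)%N) H p.1 p.2) *+ 2 =
       laplacian Phi a b *+ 2.
  rewrite -sum_pairs_lt => [|x y|x]; last by rewrite /H !subrr mul0r mulr0.
    by rewrite (dirichlet_form Phi_sym) trmx_delta -rowE -colE !mxE.
  by rewrite /H (Phi_symE Phi_sym x y); ring.
by rewrite gram_edges edges_lt => /(pmulrnI (isT : (0 < 2)%N)).
Qed.

End Incidence.

Theorem lemma3p1 (R : realType) (n : nat) (Phi : 'M[R]_n) :
  Phi^T = Phi ->
  (forall i j, 0 <= Phi i j) ->
  (forall i, Phi i i = 0) ->
  connected_graph Phi ->
  exists (m : nat) (e : 'I_m -> 'I_n * 'I_n) (F : 'M[R]_(n, m)),
    oriented_incidence Phi e F /\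
    forall c : 'I_m,
      let j := (e c).1 in let k := (e c).2 in
      let Ld := mppinv (laplacian Phi) in
      let C := commute_mx Phi in
      (row c (mppinv F))^T = Num.sqrt (Phi j k) *: (col j Ld - col k Ld) /\
      Num.sqrt (Phi j k) *: (col j Ld - col k Ld) =
        (Num.sqrt (Phi j k) / (2 * vol Phi)) *:
          ((1%:M - (n%:R)^-1 *: const_mx 1) *m (col k C - col j C)).
Proof.
move=> Phi_sym Phi_ge0 Phi_diag Phi_conn.
exists #|edges Phi|, (@edge_of R n Phi), (incidence Phi).
split=> [|c]; first exact: incidence_oriented.
set j := (edge_of c).1; set k := (edge_of c).2; cbv zeta.
have jk : j != k := edge_of_neq c.
have n_gt0 : (0 < n)%N := leq_ltn_trans (leq0n _) (ltn_ord j).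
have deg_pos i : 0 < \sum_l Phi i l.
  by case: (eqVneq i j) => [->|ij]; [apply: deg_gt0 jk | apply: deg_gt0 ij].
have L_MP := is_MP_inverse_lapinv Phi_sym Phi_ge0 Phi_conn n_gt0.
have F_MP : is_MP_inverse (incidence Phi) ((incidence Phi)^T *m lapinv Phi).
  by apply: is_MP_inverse_gram; rewrite incidence_gram.
rewrite (mppinvE L_MP) (mppinvE F_MP); split.
  rewrite tr_row trmx_mul trmxK (lapinv_sym Phi_sym Phi_ge0 Phi_conn n_gt0).
  by rewrite colE -mulmxA -colE col_incidence -scalemxAr mulmxBr -!colE.
rewrite centering_commute_col // scalerA divfK // mulf_neq0 ?pnatr_eq0 //.
by rewrite gt_eqF // vol_gt0.
Qed.
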